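(* Given any pair $\mathbf v=(v_1,v_2)$ with $1\ge v_1>v_2\ge 0$, there is one and only one real cubic polynomial $f$ with $f(0)=0$ and $f(1)=1$ which has two critical points $c_1<c_2$ in the open interval $(0,1)$ with critical values $f(c_1)=v_1$ and $f(c_2)=v_2$. *)

From HB Require Import structures.
From mathcomp Require Import all_boot all_order all_algebra.
From mathcomp Require Import reals.
Set Implicit Arguments.
Unset Strict Implicit.
Unset Printing Implicit Defensive.

From HB Require Import structures.
From mathcomp Require Import all_boot all_order all_algebra.
From mathcomp Require Import reals.
From mathcomp Require Import ring lra.

Set Implicit Arguments.
Unset Strict Implicit.
Unset Printing Implicit Defensive.

Import Order.TTheory GRing.Theory Num.Theory.
Local Open Scope ring_scope.

(* A cubic with distinct critical points c1, c2 is an affine reparametrization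
   of the smoothstep polynomial P = 3x^2 - 2x^3, whose critical points are 0
   and 1 with P(0) = 0 and P(1) = 1:
     f(x) = f(c2) + (f(c1) - f(c2)) P(u + (w - u) x),
   where u and w are the images of 0 and 1 under the affine map sending c2 to 0
   and c1 to 1.  The conditions f(0) = 0 and f(1) = 1 read
   P(u) = -v2 / (v1 - v2) and P(w) = (1 - v2) / (v1 - v2), and 0 < c1 < c2 < 1
   amounts to u > 1 and w < 0.  As P is strictly monotone on (1, +oo) and on
   (-oo, 0), with ranges (-oo, 1) and (0, +oo), each equation has exactly one
   admissible solution, and the pair (u, w) determines f. *)

Definition smoothstep {R : nzRingType} : {poly R} := 3%:R *: 'X^2 - 2%:R *: 'X^3.

Section Smoothstep.
Context {R : comNzRingType}.
Implicit Types x : R.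

Lemma horner_smoothstep x : smoothstep.[x] = 3 * x ^+ 2 - 2 * x ^+ 3.
Proof. by rewrite /smoothstep !hornerE. Qed.

Lemma horner_deriv_smoothstep x : smoothstep^`().[x] = 6 * x * (1 - x).
Proof. by rewrite /smoothstep !derivE !hornerE /=; ring. Qed.

Lemma smoothstep_1subr x : smoothstep.[1 - x] = 1 - smoothstep.[x].
Proof. by rewrite !horner_smoothstep; ring. Qed.

End Smoothstep.

Section CubicNormalForm.
Context {R : numFieldType}.
Implicit Types (f p q : {poly R}) (x : R).

Lemma eq_poly_horner p q : (forall x, p.[x] = q.[x]) -> p = q.
Proof.
move=> pq; apply/eqP; rewrite -subr_eq0; apply/eqP.
apply: (@roots_geq_poly_eq0 _ _ (mkseq (fun n => n%:R) (size (p - q)))).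
- by apply/allP => x _; rewrite /root !hornerE pq subrr.
- by apply: mkseq_uniq => m n /eqP; rewrite eqr_nat => /eqP.
- by rewrite size_mkseq.
Qed.

Lemma horner_size4 f x : (size f <= 4)%N ->
  f.[x] = f`_0 + f`_1 * x + f`_2 * x ^+ 2 + f`_3 * x ^+ 3.
Proof.
move=> f_le4; rewrite (horner_coef_wide x f_le4) !big_ord_recr big_ord0 /=.
by rewrite expr0 expr1 mulr1 add0r.
Qed.

Lemma horner_deriv_size4 f x : (size f <= 4)%N ->
  f^`().[x] = f`_1 + 2 * f`_2 * x + 3 * f`_3 * x ^+ 2.
Proof.
move=> f_le4; have f'_le4 : (size f^`() <= 4)%N.
  exact: leq_trans (size_poly _ _) (leq_trans (leq_pred _) f_le4).
rewrite horner_size4 // !coef_deriv (nth_default 0 f_le4) mul0rn mul0r addr0.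
by rewrite -!(mulr_natl (f`_ _)); ring.
Qed.

Lemma size_smoothstep : size (smoothstep : {poly R}) = 4.
Proof.
have size_X3 : size (- 2%:R *: 'X^3 : {poly R}) = 4.
  by rewrite size_scale ?size_polyXn // oppr_eq0 pnatr_eq0.
rewrite /smoothstep addrC -scaleNr size_polyDl size_X3 //.
by rewrite size_scale ?size_polyXn // pnatr_eq0.
Qed.

Definition rescaled_smoothstep (v1 v2 u w : R) : {poly R} :=
  v2%:P + (v1 - v2) *: (smoothstep \Po (u%:P + (w - u) *: 'X)).

Lemma horner_rescaled_smoothstep v1 v2 u w x :
  (rescaled_smoothstep v1 v2 u w).[x] =
    v2 + (v1 - v2) * smoothstep.[u + (w - u) * x].
Proof. by rewrite /rescaled_smoothstep !hornerE horner_comp !hornerE. Qed.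

Lemma horner_deriv_rescaled_smoothstep v1 v2 u w x :
  (rescaled_smoothstep v1 v2 u w)^`().[x] =
    (v1 - v2) * (w - u) * smoothstep^`().[u + (w - u) * x].
Proof.
have affine' : (u%:P + (w - u) *: 'X)^`() = (w - u)%:P.
  by rewrite derivD derivC derivZ derivX add0r alg_polyC.
rewrite /rescaled_smoothstep derivD derivC add0r derivZ deriv_comp affine'.
by rewrite hornerZ hornerM hornerC horner_comp hornerD hornerC hornerZ hornerX mulrA mulrAC.
Qed.

Lemma size_rescaled_smoothstep v1 v2 u w : v1 != v2 -> u != w ->
  size (rescaled_smoothstep v1 v2 u w) = 4.
Proof.
move=> v12 uw; have size_affine : size (u%:P + (w - u) *: 'X) = 2.
  have size_X : size ((w - u) *: 'X : {poly R}) = 2.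
    by rewrite size_scale ?size_polyX // subr_eq0 eq_sym.
  by rewrite addrC size_polyDl size_X // size_polyC; case: (u != 0).
have size_comp : size ((v1 - v2) *: (smoothstep \Po (u%:P + (w - u) *: 'X))) = 4.
  by rewrite size_scale ?subr_eq0 // size_comp_poly2 // size_smoothstep.
by rewrite /rescaled_smoothstep addrC size_polyDl size_comp // size_polyC; case: (v2 != 0).
Qed.

Lemma rescaled_smoothstep_crit v1 v2 u w : u != w ->
  let f := rescaled_smoothstep v1 v2 u w in
  [/\ root f^`() ((u - 1) / (u - w)), root f^`() (u / (u - w)),
      f.[(u - 1) / (u - w)] = v1 & f.[u / (u - w)] = v2].
Proof.
move=> uw f; have uw' : u - w != 0 by rewrite subr_eq0.
have at1 : u + (w - u) * ((u - 1) / (u - w)) = 1 by field.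
have at0 : u + (w - u) * (u / (u - w)) = 0 by field.
rewrite /root !horner_deriv_rescaled_smoothstep !horner_rescaled_smoothstep at1 at0.
rewrite !horner_deriv_smoothstep !horner_smoothstep.
by split; [apply/eqP; ring | apply/eqP; ring | ring | ring].
Qed.

Lemma cubic_normal_form f c1 c2 : (size f <= 4)%N -> c1 != c2 ->
  root f^`() c1 -> root f^`() c2 ->
  f = rescaled_smoothstep f.[c1] f.[c2] (c2 / (c2 - c1)) ((c2 - 1) / (c2 - c1)).
Proof.
move=> f_le4 c12 /eqP crit1 /eqP crit2.
rewrite !horner_deriv_size4 // in crit1 crit2.
apply: eq_poly_horner => x; move: crit1 crit2.
rewrite horner_rescaled_smoothstep horner_smoothstep !horner_size4 //.
move: f`_0 f`_1 f`_2 f`_3 => a0 a1 a2 a3 crit1 crit2.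
have c21 : c2 - c1 != 0 by rewrite subr_eq0 eq_sym.
have a2E : a2 = - 3 * a3 * (c1 + c2) / 2.
  have : (c1 - c2) * (2 * a2 + 3 * a3 * (c1 + c2)) = 0.
    by rewrite -[RHS](subrr 0) -{1}crit1 -crit2; ring.
  move/eqP; rewrite mulf_eq0 subr_eq0 (negbTE c12) /= => /eqP lin.
  have -> : a2 = (2 * a2 + 3 * a3 * (c1 + c2) - 3 * a3 * (c1 + c2)) / 2 by field.
  by rewrite lin; field.
have a1E : a1 = 3 * a3 * c1 * c2.
  have -> : a1 = (a1 + 2 * a2 * c1 + 3 * a3 * c1 ^+ 2) - 2 * a2 * c1 - 3 * a3 * c1 ^+ 2 by ring.
  by rewrite crit1 a2E; field.
by rewrite a1E a2E; field.
Qed.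

Lemma rescaled_smoothstep_at0 (v1 v2 u w : R) : v1 != v2 ->
  ((rescaled_smoothstep v1 v2 u w).[0] == 0) = (smoothstep.[u] == - v2 / (v1 - v2)).
Proof.
move=> v12; have K_neq0 : v1 - v2 != 0 by rewrite subr_eq0.
rewrite horner_rescaled_smoothstep mulr0 addr0.
apply/eqP/eqP => [val0 | ->]; last by field.
by apply: (mulfI K_neq0); rewrite mulrCA mulfV // mulr1 -[RHS]sub0r -val0; ring.
Qed.

Lemma rescaled_smoothstep_at1 (v1 v2 u w : R) : v1 != v2 ->
  ((rescaled_smoothstep v1 v2 u w).[1] == 1) = (smoothstep.[w] == (1 - v2) / (v1 - v2)).
Proof.
move=> v12; have K_neq0 : v1 - v2 != 0 by rewrite subr_eq0.
rewrite horner_rescaled_smoothstep mulr1 [u + _]addrC subrK.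
apply/eqP/eqP => [val1 | ->]; last by field.
by apply: (mulfI K_neq0); rewrite mulrCA mulfV // mulr1 -val1; ring.
Qed.

End CubicNormalForm.

Section RealSmoothstep.
Context {R : realFieldType}.

Lemma smoothstep_inj_gt1 : {in [pred x : R | 1 < x] &, injective (horner smoothstep)}.
Proof.
move=> u u' /[!inE] u_gt1 u'_gt1 eq_uu'; apply/eqP; rewrite -subr_eq0.
have : (u - u') * (3 * (u + u') - 2 * (u ^+ 2 + u * u' + u' ^+ 2)) == 0.
  by apply/eqP; rewrite -[RHS](subrr smoothstep.[u]) {2}eq_uu' !horner_smoothstep; ring.
rewrite mulf_eq0 => /orP[// | /eqP]; nra.
Qed.

Lemma smoothstep_inj_lt0 : {in [pred x : R | x < 0] &, injective (horner smoothstep)}.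
Proof.
move=> w w' /[!inE] w_lt0 w'_lt0 eq_ww'.
suff : 1 - w = 1 - w' by move/addrI/oppr_inj.
by apply: smoothstep_inj_gt1; rewrite ?inE ?smoothstep_1subr ?eq_ww' //; lra.
Qed.

Lemma params_of_crit (c1 c2 : R) : 0 < c1 -> c1 < c2 -> c2 < 1 ->
  1 < c2 / (c2 - c1) /\ (c2 - 1) / (c2 - c1) < 0.
Proof.
move=> c1_gt0 c12 c2_lt1; have d_gt0 : 0 < c2 - c1 by rewrite subr_gt0.
by rewrite ltr_pdivlMr // ltr_pdivrMr // mul1r mul0r; split; lra.
Qed.

Lemma crit_of_params (u w : R) : 1 < u -> w < 0 ->
  [/\ 0 < (u - 1) / (u - w), (u - 1) / (u - w) < u / (u - w) & u / (u - w) < 1].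
Proof.
move=> u_gt1 w_lt0; have d_gt0 : 0 < u - w by lra.
split; first by rewrite divr_gt0 // subr_gt0.
  by rewrite ltr_pM2r ?invr_gt0 //; lra.
by rewrite ltr_pdivrMr // mul1r; lra.
Qed.
End RealSmoothstep.

Section RealClosedSmoothstep.
Context {R : rcfType}.

Lemma smoothstep_surj_gt1 (t : R) : t <= 0 -> exists2 u, 1 < u & smoothstep.[u] = t.
Proof.
move=> t_le0; pose b := 3 / 2 - t.
have horner_Csub x : (t%:P - smoothstep).[x] = t - smoothstep.[x].
  by rewrite hornerD hornerN hornerC.
have b_ge : t - smoothstep.[b] = t * (1 - 2 * b ^+ 2).
  by rewrite horner_smoothstep /b; field.
have [u /andP[u_ge1 _]] : exists2 u, 1 <= u <= b & root (t%:P - smoothstep) u.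
  apply: poly_ivt; first by rewrite /b; lra.
  rewrite !horner_Csub b_ge horner_smoothstep expr1n.
  apply/andP; split; first lra.
  by rewrite mulr_le0 // subr_le0 /b; nra.
rewrite /root horner_Csub subr_eq0 eq_sym => /eqP Pu; exists u => //.
rewrite lt_neqAle u_ge1 andbT; apply/eqP => u_eq1; move: Pu.
by rewrite -u_eq1 horner_smoothstep expr1n; lra.
Qed.

Lemma smoothstep_surj_lt0 (t : R) : 1 <= t -> exists2 w, w < 0 & smoothstep.[w] = t.
Proof.
move=> t_ge1; have [u u_gt1 Pu] := @smoothstep_surj_gt1 (1 - t) ltac:(lra).
by exists (1 - u); [lra | rewrite smoothstep_1subr Pu subKr].
Qed.
End RealClosedSmoothstep.

Theorem lemma1 (R : realType) (v1 v2 : R) (hv : 0 <= v2 /\ v2 < v1 /\ v1 <= 1) :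
  exists! f : {poly R},
    size f = 4%N /\ f.[0] = 0 /\ f.[1] = 1 /\
    exists c1 c2 : R,
      0 < c1 /\ c1 < c2 /\ c2 < 1 /\
      root f^`() c1 /\ root f^`() c2 /\
      f.[c1] = v1 /\ f.[c2] = v2.
Proof.
case: hv => v2_ge0 [v21 v1_le1]; have v12 : v1 != v2 by rewrite gt_eqF.
have K_gt0 : 0 < v1 - v2 by rewrite subr_gt0.
have [u u_gt1 Pu] : exists2 u, 1 < u & smoothstep.[u] = - v2 / (v1 - v2).
  by apply: smoothstep_surj_gt1; rewrite mulNr oppr_le0 divr_ge0 // ltW.
have [w w_lt0 Pw] : exists2 w, w < 0 & smoothstep.[w] = (1 - v2) / (v1 - v2).
  by apply: smoothstep_surj_lt0; rewrite ler_pdivlMr // mul1r lerD2r.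
have [c1_gt0 c12 c2_lt1] := crit_of_params u_gt1 w_lt0.
have uw : u != w by rewrite gt_eqF //; lra.
have [crit1 crit2 val1 val2] := rescaled_smoothstep_crit v1 v2 uw.
exists (rescaled_smoothstep v1 v2 u w); split.
  split; first exact: size_rescaled_smoothstep.
  split; first by apply/eqP; rewrite rescaled_smoothstep_at0 // Pu.
  split; first by apply/eqP; rewrite rescaled_smoothstep_at1 // Pw.
  by exists ((u - 1) / (u - w)), (u / (u - w)).
move=> g [size_g [g0 [g1 [c1 [c2 [c1_gt0' [c12' [c2_lt1' [gcrit1 [gcrit2 [gc1 gc2]]]]]]]]]]].
have := cubic_normal_form (eq_leq size_g) (negbT (lt_eqF c12')) gcrit1 gcrit2.
rewrite gc1 gc2 => g_eq; rewrite g_eq in g0 g1 *.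
have [u'_gt1 w'_lt0] := params_of_crit c1_gt0' c12' c2_lt1'.
move/eqP: g0; rewrite rescaled_smoothstep_at0 // -Pu => /eqP /smoothstep_inj_gt1 <- //.
move/eqP: g1; rewrite rescaled_smoothstep_at1 // -Pw => /eqP /smoothstep_inj_lt0 <- //.
Qed.
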